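(* Let $1\le p<\infty$ and $\rho(t)=e^{-t^2-\epsilon pt}$, and let $\mu$ be the associated measure on $X$. Then there exists $u\in N^{1,p}(X)$ such that the trace $\widetilde u$ exists (indeed $\widetilde u\equiv0$ on $Z$) but the trace $\mathscr Tu$ does not exist.
   Context: Standing setting. $(Z,d_Z,\nu)$ is a compact metric space with $0<\operatorname{diam}Z<1$, and $\nu$ is a doubling Borel measure. Fix $\alpha,\tau>1$ and $z_0\in Z$. Let $A_0=\{z_0\}$ and, for $n\ge1$, let $A_n\subset Z$ be a maximal $\alpha^{-n}$-separated set, chosen so that $A_n\subset A_m$ whenever $m>n\ge0$. Put $V_n=\{(x,n):x\in A_n\}$, $V=\bigcup_nV_n$, root $v_0=(z_0,0)$, $B_v=\mathbb B_Z(x,\alpha^{-n})$ for $v=(x,n)$. Two distinct vertices $(x,n),(y,m)$ are joined by an edge iff $|n-m|\le1$ and $\mathbb B_Z(x,\tau^{1-|n-m|}\alpha^{-n})\cap\mathbb B_Z(y,\tau^{1-|n-m|}\alpha^{-m})\neq\emptyset$. $X$ is this graph as a metric graph with unit-length edges; $|x|$ is the graph distance from $x$ to $v_0$, $d|x|$ is length measure on edges. Let $\epsilon=\log\alpha$, $d(y,z)=\inf_\gamma\int_\gamma e^{-\epsilon|x|}d|x|$, $ds=e^{-\epsilon|x|}d|x|$. Given a Borel $\rho:[0,\infty)\to(0,\infty)$, $\rho\in L^1_{\rm loc}$, $d\mu(x)=\rho(|x|)(\nu(B_{v_1})+\nu(B_{v_2}))\,d|x|$ for $x$ interior to the edge $[v_1,v_2]$.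 The boundary of $(X,d)$ is identified with $Z$. For $\xi\in Z$, $A_n(\xi)=A_n\cap\mathbb B_Z(\xi,\alpha^{-n})$, $V_n(\xi)=\{(x,n):x\in A_n(\xi)\}$; a geodesic ray $[v_0,\xi)=\bigcup_{n\ge0}[v_n(\xi),v_{n+1}(\xi)]$ with $v_n(\xi)\in V_n(\xi)$. $\mathscr Tu$ exists if for $\nu$-a.e. $\xi$ the limit of $u(x)$ as $x\to\xi$ along $[v_0,\xi)$ exists for every geodesic ray and is ray-independent. $\widetilde u$ exists if $\lim_n u_n(\xi)$ exists for $\nu$-a.e. $\xi$, where $u_n(\xi)=\frac1{\#A_n(\xi)}\sum_{z\in A_n(\xi)}u((z,n))$. Upper gradients: Borel $g\ge0$ with $|u(x)-u(y)|\le\int_\gamma g\,ds$ for each nonconstant compact rectifiable curve $\gamma$ with endpoints $x,y$. $N^{1,p}(X)$: $u\in L^p(X,\mu)$ with an upper gradient in $L^p(X,\mu)$, norm $\|u\|_{L^p}+\inf_g\|g\|_{L^p}$. *)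

From HB Require Import structures.
From mathcomp Require Import all_boot all_order all_algebra.
From mathcomp Require Import all_classical all_reals all_analysis.
From mathcomp Require Import measurable_realfun.
Import Order.TTheory GRing.Theory Num.Theory.
Import numFieldNormedType.Exports.

Set Implicit Arguments.
Unset Strict Implicit.
Unset Printing Implicit Defensive.

Local Open Scope classical_set_scope.
Local Open Scope ring_scope.

Section MetricZ.
Context {R : realType} {Z : pointedType} (dZ : Z -> Z -> R).

Definition is_metric : Prop :=
  [/\ (forall x y, 0 <= dZ x y),
      (forall x y, dZ x y = 0 <-> x = y),
      (forall x y, dZ x y = dZ y x) &
      (forall x y z, dZ x z <= dZ x y + dZ y z)].

Definition ballZ (x : Z) (r : R) : set Z := [set y | dZ x y < r].

Definition openZ : set (set Z) :=
  [set U | forall x, U x -> exists2 r : R, 0 < r & ballZ x r `<=` U].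

Definition metric_compact : Prop :=
  forall s : nat -> Z, exists phi : nat -> nat,
    (forall n, (phi n < phi n.+1)%N) /\
    exists z : Z, (fun n => dZ (s (phi n)) z) @ \oo --> 0.

Definition diamZ : \bar R :=
  ereal_sup (range (fun xy : Z * Z => (dZ xy.1 xy.2)%:E)).

Definition separated (eps : R) (S : set Z) : Prop :=
  forall x y, S x -> S y -> x <> y -> eps <= dZ x y.

Definition maximal_separated (eps : R) (S : set Z) : Prop :=
  separated eps S /\
  forall S', S `<=` S' -> separated eps S' -> S' = S.

End MetricZ.

Definition doubling {R : realType} {Z : pointedType} (dZ : Z -> Z -> R)
  (nu : {measure set (g_sigma_algebraType (openZ dZ)) -> \bar R}) : Prop :=
  (forall (x : Z) (r : R), 0 < r ->
      (0 < nu (ballZ dZ x r))%E /\ (nu (ballZ dZ x r) < +oo)%E) /\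
  exists C : R, forall (x : Z) (r : R), 0 < r ->
      (nu (ballZ dZ x (2 * r)) <= C%:E * nu (ballZ dZ x r))%E.

Section Filling.
Context {R : realType} {Z : pointedType} (dZ : Z -> Z -> R)
  (A : nat -> set Z) (alpha tau : R) (z0 : Z).

Definition inV (v : Z * nat) : Prop := A v.2 v.1.

Definition root : Z * nat := (z0, 0%N).

Definition adj (v w : Z * nat) : Prop :=
  [/\ inV v, inV w, v <> w,
      (v.2 <= w.2.+1)%N /\ (w.2 <= v.2.+1)%N &
      (* tau^(1 - |n - m|) is tau if n = m and 1 if |n - m| = 1 *)
      let c := if v.2 == w.2 then tau else 1 in
      exists z : Z, ballZ dZ v.1 (c * alpha ^- v.2) z /\
                    ballZ dZ w.1 (c * alpha ^- w.2) z].

Definition vpath (k : nat) (v w : Z * nat) : Prop :=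
  exists f : nat -> Z * nat,
    [/\ f 0%N = v, f k = w & forall i, (i < k)%N -> adj (f i) (f i.+1)].

Definition distV (v w : Z * nat) : R :=
  inf [set (k%:R : R) | k in [set k | vpath k v w]].

(* Points of the metric graph X: a triple (v, w, t) is the point at
   distance t from v on the edge [v, w] (t in [0,1]); the triple
   (v, v, 0) with v a vertex represents the vertex v itself.  Several
   triples represent the same point of X (they are at dG-distance 0). *)
Definition XP : Type := ((Z * nat) * (Z * nat) * R)%type.

Definition validX : set XP :=
  [set p | (p.1.1 = p.1.2 /\ inV p.1.1 /\ p.2 = 0) \/
           (adj p.1.1 p.1.2 /\ 0 <= p.2 <= 1)].

Definition vert (v : Z * nat) : XP := (v, v, 0).

(* the path metric of X (unit-length edges) *)
Definition via_ends (p q : XP) : R :=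
  let '(v, w, t) := p in let '(v', w', t') := q in
  Num.min (Num.min (t + distV v v' + t') (t + distV v w' + (1 - t')))
          (Num.min ((1 - t) + distV w v' + t') ((1 - t) + distV w w' + (1 - t'))).

Definition dG (p q : XP) : R :=
  let '(v, w, t) := p in let '(v', w', t') := q in
  if (v == v') && (w == w') then Num.min `|t - t'| (via_ends p q)
  else if (v == w') && (w == v') then Num.min `|t - (1 - t')| (via_ends p q)
  else via_ends p q.

Definition xnorm (p : XP) : R :=
  let '(v, w, t) := p in
  Num.min (t + distV v root) ((1 - t) + distV w root).

Definition eps : R := ln alpha.

Definition openX : set (set XP) :=
  [set U | U `<=` validX /\
     forall p, U p -> exists2 r : R, 0 < r &
       forall q, validX q -> dG p q < r -> U q].


(* functions on X: functions on the representatives that do not depend on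
   the chosen representative, and are Borel on X *)
Definition respects {T : Type} (f : XP -> T) : Prop :=
  forall p q, validX p -> validX q -> dG p q = 0 -> f p = f q.

Definition borelX_e (f : XP -> \bar R) : Prop :=
  forall B : set (\bar R), measurable B -> <<s openX >> (validX `&` f @^-1` B).

Definition borelX_r (f : XP -> R) : Prop :=
  forall B : set R, measurable B -> <<s openX >> (validX `&` f @^-1` B).

Definition is_curve (gamma : R -> XP) (a b : R) : Prop :=
  a < b /\
  (forall s, a <= s <= b -> validX (gamma s)) /\
  forall s, a <= s <= b -> forall e : R, 0 < e ->
    exists2 d : R, 0 < d & forall s', a <= s' <= b -> `|s - s'| < d ->
      dG (gamma s) (gamma s') < e.

Definition nonconstant (gamma : R -> XP) (a b : R) : Prop :=
  exists s, a <= s <= b /\ 0 < dG (gamma a) (gamma s).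

Definition psum (gamma : R -> XP) (s : seq R) : R :=
  \sum_(i < (size s).-1) dG (gamma (nth 0 s i)) (gamma (nth 0 s i.+1)).

Definition clength (gamma : R -> XP) (a t : R) : \bar R :=
  ereal_sup [set (psum gamma s)%:E | s in
     [set s : seq R | sorted <=%R s /\ all (fun x => a <= x <= t) s]].

Definition rectifiable (gamma : R -> XP) (a b : R) : Prop :=
  (clength gamma a b < +oo)%E.

(* arc-length parametrisation: sigma |-> gamma(t) for t with s_gamma(t)=sigma *)
Definition arcparam (gamma : R -> XP) (a b : R) (sigma : R) : XP :=
  gamma (inf [set t | a <= t <= b /\ (sigma%:E <= clength gamma a t)%E]).

(* line integral int_gamma g ds, where ds = e^{-eps |x|} d|x| *)
Definition line_int (gamma : R -> XP) (a b : R) (g : XP -> \bar R) : \bar R :=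
  let I : set R := [set` `[(0:R), fine (clength gamma a b)]] in
  (\int[lebesgue_measure]_(sigma in I)
     (g (arcparam gamma a b sigma) *
      (expR (- eps * xnorm (arcparam gamma a b sigma)))%:E))%E.

Definition upper_gradient (u : XP -> R) (g : XP -> \bar R) : Prop :=
  respects g /\ borelX_e g /\ (forall p, validX p -> (0 <= g p)%E) /\
  forall (gamma : R -> XP) (a b : R),
    is_curve gamma a b -> nonconstant gamma a b -> rectifiable gamma a b ->
    (`|u (gamma a) - u (gamma b)|%:E <= line_int gamma a b g)%E.

End Filling.

Section Newtonian.
Context {R : realType} {Z : pointedType} (dZ : Z -> Z -> R)
  (nu : {measure set (g_sigma_algebraType (openZ dZ)) -> \bar R})
  (A : nat -> set Z) (alpha tau : R) (z0 : Z) (rho : R -> R).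

Local Notation adj := (adj dZ A alpha tau).
Local Notation XP := (@XP R Z).

Definition Bv (v : Z * nat) : set Z := ballZ dZ v.1 (alpha ^- v.2).

(* int_X f dmu for f >= 0, where
   dmu(x) = rho(|x|) (nu(B_v1) + nu(B_v2)) d|x| on the edge [v1, v2]
   (each edge is counted twice in the sum over ordered pairs) *)
Definition unit_itv : set R := [set` `[(0:R), (1:R)]].

Definition mu_int (f : XP -> \bar R) : \bar R :=
  ((2^-1)%:E *
   \esum_(vw in [set vw : (Z * nat) * (Z * nat) | adj vw.1 vw.2])
      ((nu (Bv vw.1) + nu (Bv vw.2)) *
       \int[lebesgue_measure]_(t in unit_itv)
          (f (vw.1, vw.2, t) * (rho (xnorm dZ A alpha tau z0 (vw.1, vw.2, t)))%:E)))%E.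

Definition in_Lp_r (p : R) (u : XP -> R) : Prop :=
  respects dZ A alpha tau u /\ borelX_r dZ A alpha tau u /\
  (mu_int (fun x => (`|u x| `^ p)%:E) < +oo)%E.

Definition in_Lp_e (p : R) (g : XP -> \bar R) : Prop :=
  (mu_int (fun x => (g x `^ p)%E) < +oo)%E.

Definition in_N1p (p : R) (u : XP -> R) : Prop :=
  in_Lp_r p u /\
  exists g : XP -> \bar R,
    upper_gradient dZ A alpha tau z0 u g /\ in_Lp_e p g.

End Newtonian.

Section Traces.
Context {R : realType} {Z : pointedType} (dZ : Z -> Z -> R)
  (nu : {measure set (g_sigma_algebraType (openZ dZ)) -> \bar R})
  (A : nat -> set Z) (alpha : R).

Definition An_xi (n : nat) (xi : Z) : set Z :=
  A n `&` ballZ dZ xi (alpha ^- n).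

(* a geodesic ray [v0, xi): v_n(xi) = (xs n, n) with xs n in A_n(xi);
   its points are (v_n, v_{n+1}, t), t in [0,1] *)
Definition is_ray (xi : Z) (xs : nat -> Z) : Prop :=
  forall n, An_xi n xi (xs n).

Definition ray_point (xs : nat -> Z) (n : nat) (t : R) : @XP R Z :=
  ((xs n, n), (xs n.+1, n.+1), t).

Definition ray_limit (u : @XP R Z -> R) (xs : nat -> Z) (L : R) : Prop :=
  forall e : R, 0 < e -> exists N : nat, forall n : nat, (N <= n)%N ->
    forall t : R, 0 <= t <= 1 -> `|u (ray_point xs n t) - L| < e.

Definition trace_T_exists (u : @XP R Z -> R) : Prop :=
  {ae nu, forall xi : g_sigma_algebraType (openZ dZ),
     exists L : R, forall xs, is_ray xi xs -> ray_limit u xs L}.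

Definition u_avg (u : @XP R Z -> R) (xi : Z) (n : nat) : R :=
  (\sum_(z \in An_xi n xi) u (vert (z, n))) / (\sum_(z \in An_xi n xi) (1 : R)).

Definition trace_tilde_is (u : @XP R Z -> R) (c : R) : Prop :=
  {ae nu, forall xi : g_sigma_algebraType (openZ dZ),
     u_avg u xi @ \oo --> c}.

Definition trace_tilde_exists (u : @XP R Z -> R) : Prop :=
  {ae nu, forall xi : g_sigma_algebraType (openZ dZ),
     cvgn (u_avg u xi)}.

End Traces.

From Pilot Require Import Defs.
From HB Require Import structures.
From mathcomp Require Import all_boot all_order all_algebra.
From mathcomp Require Import all_classical all_reals all_analysis.
From mathcomp Require Import measurable_realfun.
From mathcomp Require Import ring lra zify.
Import Order.TTheory GRing.Theory Num.Theory.
Import numFieldNormedType.Exports.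
Local Open Scope classical_set_scope.
Local Open Scope ring_scope.
Set Implicit Arguments.
Unset Strict Implicit.
Unset Printing Implicit Defensive.

(* The weight rho(t) = e^{-t^2 - eps p t} exactly compensates the p-th power of
   g(x) = e^{eps |x|}, so g^p rho(|x|) = e^{-|x|^2}.  By the doubling property
   the number of edges at level m grows only geometrically in m, so the
   Gaussian factor makes g, and any bounded function, p-integrable.  Since
   ds = e^{-eps |x|} d|x|, the g-length of a curve is its length in X, so g is
   an upper gradient of every 1-Lipschitz function on X.  Take u to be the
   tent function on the vertical edges (0 at both ends, 1/2 at the midpoint)
   and 0 on the horizontal ones: all vertex averages u_n(xi) vanish, but along
   every geodesic ray u keeps oscillating between 0 and 1/2, and nu(Z) > 0. *)

(** * Paths in the filling graph *)

Section FillingGraph.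
Context {R : realType} {Z : pointedType} (dZ : Z -> Z -> R)
  (A : nat -> set Z) (alpha tau : R).

Local Notation adj := (adj dZ A alpha tau).
Local Notation vpath := (vpath dZ A alpha tau).
Local Notation distV := (distV dZ A alpha tau).

Lemma adj_sym v w : adj v w -> adj w v.
Proof.
case=> iv iw vw [l1 l2] [z [z1 z2]]; split => //.
- by move=> e; apply: vw.
- by rewrite eq_sym; exists z.
Qed.

Lemma adj_vpath v w : adj v w -> vpath 1 v w.
Proof. by move=> h; exists (fun i => if i is 0%N then v else w); split => // -[]. Qed.

Lemma vpath_rev k v w : vpath k v w -> vpath k w v.
Proof.
case=> f [f0 fk fa]; exists (fun i => f (k - i)%N); split.
- by rewrite subn0.
- by rewrite subnn.
- move=> i ik; apply: adj_sym.
  have -> : (k - i = (k - i.+1).+1)%N by lia.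
  apply: fa; lia.
Qed.

Lemma vpath_cat k l u v w : vpath k u v -> vpath l v w -> vpath (k + l) u w.
Proof.
case=> f [f0 fk fa]; case=> g [g0 gl ga].
exists (fun i => if (i <= k)%N then f i else g (i - k)%N); split.
- by rewrite leq0n.
- case: (leqP (k + l) k) => h.
  + have l0 : l = 0%N by lia.
    by subst l; rewrite addn0 fk -g0 -gl.
  + by rewrite addKn.
- move=> i ikl /=; case: (ltnP i k) => h.
  + have -> : (i <= k)%N by lia.
    by rewrite ?h; apply: fa.
  + case: (leqP i k) => h2.
    * have ek : i = k by lia.
      subst i; rewrite subSnn fk -g0; apply: ga; lia.
    * rewrite subSn //; apply: ga; lia.
Qed.

Lemma vpath_level_le k v w : vpath k v w -> (v.2 <= k + w.2)%N.
Proof.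
case=> f [<- <- fa].
suff H i : (i <= k)%N -> ((f 0%N).2 <= i + (f i).2)%N by exact: H.
elim: i => [|i IH] ik; first by rewrite add0n.
have [_ _ _ [le_fi _] _] := fa i ik.
by apply: (leq_trans (IH (ltnW ik))); rewrite addSn -addnS leq_add2l.
Qed.

Lemma distV_ge0 v w : 0 <= distV v w.
Proof.
rewrite /Defs.distV; set S := [set _ | _ in _].
have [[x Sx]|/forallNP S0] := pselect (exists x, S x).
  by apply: lb_le_inf; [exists x|move=> y [k _ <-]].
by rewrite (_ : S = set0) ?inf0 //; apply/seteqP; split => // x /S0.
Qed.

Lemma distV_le_vpath k v w : vpath k v w -> distV v w <= k%:R.
Proof. by move=> h; apply: ge_inf; [exists 0 => y [j _ <-]|exists k]. Qed.

Lemma distV_adj_le1 v w : adj v w -> distV v w <= 1.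
Proof. by move/adj_vpath/distV_le_vpath. Qed.

Lemma distV_sym v w : distV v w = distV w v.
Proof.
rewrite /Defs.distV; congr inf; apply/seteqP; split => x [k hk <-]; exists k => //=;
  exact: vpath_rev.
Qed.

Lemma distV_triangle u v w : (exists k, vpath k u v) -> (exists k, vpath k v w) ->
  distV u w <= distV u v + distV v w.
Proof.
move=> [k0 h0] [l0 h1].
have H2 l : vpath l v w -> distV u w - l%:R <= distV u v.
  move=> hl; apply: lb_le_inf; first by exists k0%:R, k0.
  move=> _ [k hk <-]; rewrite lerBlDr -natrD.
  exact/distV_le_vpath/(vpath_cat hk hl).
rewrite -lerBlDl; apply: lb_le_inf; first by exists l0%:R, l0.
by move=> _ [l hl <-]; rewrite lerBlDl -lerBlDr; apply: H2.
Qed.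

End FillingGraph.

Section MetricFacts.
Context {R : realType} {Z : pointedType} (dZ : Z -> Z -> R).
Hypothesis Hm : is_metric dZ.

Lemma dZ_xx x : dZ x x = 0.
Proof. by case: Hm => _ H _ _; apply/H. Qed.

Lemma dZ_sym x y : dZ x y = dZ y x.
Proof. by case: Hm => _ _ H _; apply: H. Qed.

Lemma dZ_triangle x y z : dZ x z <= dZ x y + dZ y z.
Proof. by case: Hm => _ _ _ H; apply: H. Qed.

Lemma ballZ_measurable x r :
  measurable (ballZ dZ x r : set (g_sigma_algebraType (openZ dZ))).
Proof.
apply: sub_sigma_algebra => y hy; exists (r - dZ x y); first by rewrite subr_gt0.
by move=> z hz; rewrite /ballZ /= in hy hz *; have := dZ_triangle x y z; lra.
Qed.

End MetricFacts.

Lemma normr_minB_le (R : realDomainType) (x y x' y' e : R) :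
  `|x - x'| <= e -> `|y - y'| <= e -> `|Num.min x y - Num.min x' y'| <= e.
Proof.
rewrite !ler_norml => /andP[h1 h2] /andP[h3 h4].
case: (leP x y) => c1; case: (leP x' y') => c2;
  rewrite ?(min_l (ltW c1)) ?(min_r (ltW c1)) ?(min_l c1) ?(min_r c1)
          ?(min_l (ltW c2)) ?(min_r (ltW c2)) ?(min_l c2) ?(min_r c2);
  apply/andP; split; lra.
Qed.

Definition tent (R : realFieldType) (t : R) : R := Num.min t (1 - t).

Lemma tent_ge0 (R : realFieldType) (t : R) : 0 <= t <= 1 -> 0 <= tent t.
Proof. by move=> /andP[t0 t1]; rewrite le_min; apply/andP; split; lra. Qed.

Lemma tent_le (R : realFieldType) (t : R) : tent t <= t /\ tent t <= 1 - t.
Proof. by rewrite /tent !ge_min !lexx orbT. Qed.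

Lemma tent0 (R : realFieldType) : tent (0 : R) = 0.
Proof. by rewrite /tent subr0 min_l // ler01. Qed.

Lemma tent_half (R : realFieldType) : tent (2^-1 : R) = 2^-1.
Proof. by rewrite /tent (_ : 1 - 2^-1 = 2^-1 :> R) ?minxx //; lra. Qed.

Lemma ge0_le_integral_nomeas d (T : measurableType d) (R : realType)
    (mu : {measure set T -> \bar R}) (D : set T) (f g : T -> \bar R) :
  (forall x, D x -> (0 <= f x)%E) -> (forall x, D x -> (f x <= g x)%E) ->
  (\int[mu]_(x in D) f x <= \int[mu]_(x in D) g x)%E.
Proof.
move=> f0 fg.
rewrite ge0_integralE // [X in (_ <= X)%E]ge0_integralE; last first.
  by move=> x Dx; apply: le_trans (f0 x Dx) (fg x Dx).
apply: ge_ereal_sup => _ [h hf <-]; apply: ereal_sup_ubound; exists h => //= x.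
apply: le_trans (hf x) _; rewrite /patch; case: ifP => // /set_mem Dx.
exact: fg.
Qed.

Lemma sum_nat_delta (R : pzRingType) (F : nat -> R) k N : (k < N)%N ->
  \sum_(0 <= m < N) (k == m)%:R * F m = F k.
Proof.
move=> kN; rewrite (bigD1_seq k) ?mem_index_iota ?iota_uniq //= eqxx mul1r.
by rewrite big1 ?addr0 // => m /negbTE; rewrite eq_sym => ->; rewrite mul0r.
Qed.

Lemma sum_comp_count (R : pzRingType) (X : eqType) (s : seq X) (l : X -> nat)
    (F : nat -> R) N :
  (forall x, x \in s -> (l x < N)%N) ->
  \sum_(x <- s) F (l x) = \sum_(0 <= m < N) (count (fun x => l x == m) s)%:R * F m.
Proof.
elim: s => [|x s IH] hs; first by rewrite big_nil big1 // => m _; rewrite mul0r.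
rewrite big_cons IH; last by move=> y ys; apply: hs; rewrite inE ys orbT.
rewrite -(sum_nat_delta F (hs x (mem_head _ _))) -big_split /=.
by apply: eq_bigr => m _; rewrite natrD mulrDl.
Qed.

Lemma sum_halfexp_le2 (R : realType) N : \sum_(0 <= m < N) (2^-1 : R) ^+ m <= 2.
Proof.
rewrite -[N]add0n geometric_partial_tail expr0.
apply: le_trans (geometric_le_lim _ ler01 _ _) _ => //.
  by rewrite gtr0_norm // invf_lt1 // ltr1n.
by rewrite (_ : 1 - 2^-1 = 2^-1 :> R) ?div1r ?invrK //; lra.
Qed.

(* From m ln(2q) - m^2 <= ln(2q)^2: the Gaussian factor beats any geometric growth. *)
Lemma expX_gauss_le (R : realType) (q : R) m : 1 <= q ->
  q ^+ m * expR (- (m%:R) ^+ 2) <= expR (ln (2 * q) ^+ 2) * 2^-1 ^+ m.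
Proof.
move=> q1; have q0 : 0 < 2 * q by rewrite mulr_gt0 //; apply: lt_le_trans ltr01 q1.
set L := ln (2 * q).
have L0 : 0 <= L by rewrite /L ln_ge0 //; rewrite -[1]mul1r ler_pM //; lra.
have e : (2 * q) ^+ m = expR (m%:R * L) by rewrite expRM_natl /L lnK // posrE.
have -> : q ^+ m = expR (m%:R * L) * 2^-1 ^+ m.
  by rewrite -e exprMn mulrC mulrA -exprMn mulVf ?expr1n ?mul1r.
rewrite mulrAC; apply: ler_wpM2r; first by apply: exprn_ge0; rewrite invr_ge0.
rewrite -expRD ler_expR; have m0 : 0 <= (m%:R : R) by [].
nra.
Qed.

Lemma not_ae_nowhere d (T : measurableType d) (R : realType)
    (mu : {measure set T -> \bar R}) (P : T -> Prop) :
  (forall x, ~ P x) -> (0 < mu setT)%E -> ~ {ae mu, forall x, P x}.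
Proof.
move=> nP muT_gt0 [N [mN N0 sub]].
have : (mu setT <= mu N)%E.
  by apply: le_measure; rewrite ?inE // => x _; apply: sub; exact: nP.
by rewrite N0 leNgt muT_gt0.
Qed.

Lemma expR_sqr_drift_le (R : realType) (c x : R) : 0 <= c -> 0 <= x ->
  expR (- x ^+ 2 - c * x) <= expR (- x ^+ 2).
Proof. by move=> c0 x0; rewrite ler_expR lerBlDr lerDl mulr_ge0. Qed.

Section FillingX.
Context {R : realType} {Z : pointedType} (dZ : Z -> Z -> R)
  (A : nat -> set Z) (alpha tau : R) (z0 : Z).

Hypothesis Hm : is_metric dZ.
Hypothesis Hdiam : (diamZ dZ < 1)%E.
Hypothesis Ha : 1 < alpha.
Hypothesis HA0 : A 0%N = [set z0].
Hypothesis Hmax : forall n : nat, (0 < n)%N -> maximal_separated dZ (alpha ^- n) (A n).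

Local Notation adj := (adj dZ A alpha tau).
Local Notation vpath := (vpath dZ A alpha tau).
Local Notation distV := (distV dZ A alpha tau).
Local Notation validX := (validX dZ A alpha tau).
Local Notation dG := (dG dZ A alpha tau).
Local Notation openX := (openX dZ A alpha tau).
Local Notation xn := (xnorm dZ A alpha tau z0).
Local Notation D v := (distV v (Defs.root z0)).

Lemma dZ_lt1 x y : dZ x y < 1.
Proof.
have h : ((dZ x y)%:E <= diamZ dZ)%E by apply: ereal_sup_ubound; exists (x, y).
by rewrite -lte_fin; apply: le_lt_trans h Hdiam.
Qed.

Lemma alpha_expN_gt0 n : 0 < alpha ^- n.
Proof. by rewrite invr_gt0 exprn_gt0 // (lt_trans ltr01 Ha). Qed.

(* Maximality of the separated set A_n makes it an alpha^-n-net of Z. *)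
Lemma net_cover n xi : exists2 y, A n y & dZ xi y < alpha ^- n.
Proof.
case: n => [|n].
  by exists z0; [rewrite HA0|rewrite expr0 invr1; apply: dZ_lt1].
case: (pselect (exists2 y, A n.+1 y & dZ xi y < alpha ^- n.+1)) => // H; exfalso.
have [sep maxi] := Hmax (ltn0Sn n).
have far y : A n.+1 y -> alpha ^- n.+1 <= dZ xi y.
  by move=> Ay; rewrite leNgt; apply/negP => lt; apply: H; exists y.
have nAxi : ~ A n.+1 xi.
  by move=> Ax; have := far _ Ax; rewrite dZ_xx // leNgt alpha_expN_gt0.
have e : A n.+1 `|` [set xi] = A n.+1.
  apply: maxi; first exact: subsetUl.
  move=> x y [Ax|->] [Ay|->] xy.
  + exact: sep.
  + by rewrite dZ_sym //; apply: far.
  + exact: far.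
  + by case: xy.
by apply: nAxi; rewrite -e; right.
Qed.

Lemma vpath_root n x : A n x -> vpath n (x, n) (Defs.root z0).
Proof.
elim: n x => [|n IH] x Ax.
  by rewrite HA0 in Ax; rewrite Ax; exists (fun _ => Defs.root z0); split.
have [y Ay dxy] := net_cover n x.
have [f [f0 fn fa]] := IH y Ay.
exists (fun i => if i is j.+1 then f j else (x, n.+1)); split => //.
case=> [_|i]; last by rewrite ltnS => /fa.
rewrite f0; split => //=.
- by case => _; lia.
- by split; lia.
- have -> : (n.+1 == n) = false by lia.
  exists x; split; rewrite /ballZ /= mul1r.
  + by rewrite dZ_xx // alpha_expN_gt0.
  + by rewrite dZ_sym.
Qed.

Lemma inV_vpath_root v : inV A v -> vpath v.2 v (Defs.root z0).
Proof. by case: v => x n /= h; apply: vpath_root. Qed.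

Lemma level_le_distV_root v : inV A v -> (v.2)%:R <= D v.
Proof.
move=> h; apply: lb_le_inf; first by exists (v.2)%:R, v.2 => //; apply: inV_vpath_root.
by move=> _ [k hk <-]; rewrite ler_nat; have := vpath_level_le hk; rewrite addn0.
Qed.

Lemma distV_root_triangle v w : inV A v -> inV A w -> D v <= distV v w + D w.
Proof.
move=> hv hw; apply: distV_triangle; last by exists w.2; apply: inV_vpath_root.
exists (v.2 + w.2)%N; apply: vpath_cat (inV_vpath_root hv) _.
exact: vpath_rev (inV_vpath_root hw).
Qed.

Lemma validX_t v w t : validX (v, w, t) -> 0 <= t <= 1.
Proof. by case=> [[_ [_ /= ->]]|[_ h]] //; rewrite lexx ler01. Qed.

Lemma validX_inV v w t : validX (v, w, t) -> inV A v /\ inV A w.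
Proof. by case=> [[/= -> [h _]]|[[h1 h2 _ _ _] _]]. Qed.

Lemma validX_distV_root v w t : validX (v, w, t) -> D v <= 1 + D w /\ D w <= 1 + D v.
Proof.
case=> [[/= -> _]|[h _]]; first by split; lra.
have [h1 h2 _ _ _] := h.
split; [apply: le_trans (distV_root_triangle h1 h2) _|
        apply: le_trans (distV_root_triangle h2 h1) _];
  rewrite lerD2r; apply: distV_adj_le1 => //; exact: adj_sym.
Qed.

(** * Lipschitz functions on X *)

(* dG is the minimum over the ways of travelling between two points (along a
   common edge, or through the endpoints), so a function that is 1-Lipschitz
   along edges and is controlled at the endpoints by a distV-Lipschitz
   potential Phi is 1-Lipschitz for dG. *)
Lemma dG_lipschitz (F : XP -> R) (Phi : Z * nat -> R) :
  (forall v w t t', `|F (v, w, t) - F (v, w, t')| <= `|t - t'|) ->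
  (forall v w t, F (w, v, t) = F (v, w, 1 - t)) ->
  (forall v w t, validX (v, w, t) ->
     [/\ F (v, w, t) <= t + Phi v, F (v, w, t) <= 1 - t + Phi w,
         Phi v <= t + F (v, w, t) & Phi w <= 1 - t + F (v, w, t)]) ->
  (forall v w, inV A v -> inV A w -> Phi v <= distV v w + Phi w) ->
  forall p q, validX p -> validX q -> `|F p - F q| <= dG p q.
Proof.
move=> F_edge F_rev F_ends Phi_lip [[v w] t] [[v' w'] t'] vp vq.
have [p1 p2 p3 p4] := F_ends _ _ _ vp; have [q1 q2 q3 q4] := F_ends _ _ _ vq.
have [iv iw] := validX_inV vp; have [iv' iw'] := validX_inV vq.
have through (a b Fp Fq Px Py d : R) : Fp <= a + Px -> Px <= d + Py ->
    Py <= b + Fq -> Fq <= b + Py -> Py <= d + Px -> Px <= a + Fp ->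
    `|Fp - Fq| <= a + d + b.
  by move=> *; rewrite ler_norml; apply/andP; split; lra.
have T : `|F (v, w, t) - F (v', w', t')|
         <= via_ends dZ A alpha tau (v, w, t) (v', w', t').
  rewrite /via_ends !le_min; apply/andP; split; apply/andP; split;
    (apply: through; [eassumption|apply: Phi_lip => //|eassumption|eassumption|
      rewrite distV_sym; apply: Phi_lip => //|eassumption]).
rewrite /Defs.dG /=; case: ifP => [/andP[/eqP e1 /eqP e2]|_].
  by subst v' w'; rewrite le_min T andbT F_edge.
case: ifP => [/andP[/eqP e1 /eqP e2]|_] //.
by subst v' w'; rewrite le_min T andbT (F_rev v w t') F_edge.
Qed.

(* A vertex v is represented by (v, v, 0), on which u_tent is 0, or by an
   endpoint of an edge, where tent is 0. *)
Definition u_tent (p : @XP R Z) : R := if p.1.1.2 != p.1.2.2 then tent p.2 else 0.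

Lemma u_tent_lipschitz p q : validX p -> validX q -> `|u_tent p - u_tent q| <= dG p q.
Proof.
apply: (dG_lipschitz (Phi := fun _ => 0)).
- move=> v w t t'; rewrite /u_tent /=; case: (v.2 != w.2); last by rewrite subrr normr0.
  apply: normr_minB_le => //.
  by rewrite (_ : 1 - t - (1 - t') = - (t - t')) ?normrN //; ring.
- move=> v w t; rewrite /u_tent /= eq_sym /tent (_ : 1 - (1 - t) = t); last by ring.
  by rewrite minC.
- move=> v w t vp; have /andP[t0 t1] := validX_t vp.
  have [m1 m2] := tent_le t; have m0 := tent_ge0 (validX_t vp).
  by rewrite /u_tent /=; case: ifP => _; split; lra.
- by move=> x y _ _; rewrite addr0 distV_ge0.
Qed.

Lemma xnorm_lipschitz p q : validX p -> validX q -> `|xn p - xn q| <= dG p q.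
Proof.
apply: (dG_lipschitz (Phi := fun v => D v)).
- move=> v w t t'; apply: normr_minB_le; rewrite opprD addrACA subrr addr0 //.
  by rewrite (_ : 1 - t - (1 - t') = - (t - t')) ?normrN //; ring.
- move=> v w t; rewrite /xnorm /= (_ : 1 - (1 - t) = t); last by ring.
  by rewrite minC.
- move=> v w t vp; have /andP[t0 t1] := validX_t vp.
  have [d1 d2] := validX_distV_root vp.
  rewrite /xnorm; split; rewrite ?ge_min ?lexx ?orbT //;
  case: (leP (t + D v) (1 - t + D w)) => c;
    rewrite ?(min_l c) ?(min_r (ltW c)); lra.
- by move=> x y hx hy; apply: distV_root_triangle.
Qed.

Definition lvl (vw : (Z * nat) * (Z * nat)) : nat := minn vw.1.2 vw.2.2.

Lemma lvl_le_xnorm v w t : adj v w -> 0 <= t <= 1 -> (lvl (v, w))%:R <= xn (v, w, t).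
Proof.
move=> [iv iw _ _ _] /andP[t0 t1].
have dv := level_le_distV_root iv; have dw := level_le_distV_root iw.
have l1 : (lvl (v, w))%:R <= (v.2)%:R :> R by rewrite ler_nat geq_minl.
have l2 : (lvl (v, w))%:R <= (w.2)%:R :> R by rewrite ler_nat geq_minr.
by rewrite /xnorm le_min; apply/andP; split; lra.
Qed.

Lemma validX_measurable : measurable (validX : set (g_sigma_algebraType openX)).
Proof. by apply: sub_sigma_algebra; split => // p vp; exists 1. Qed.

Section Lipschitz.
Variable F : @XP R Z -> R.
Hypothesis F_lip : forall p q, validX p -> validX q -> `|F p - F q| <= dG p q.

Lemma lipschitz_measurable :
  measurable_fun (validX : set (g_sigma_algebraType openX))
                 (F : g_sigma_algebraType openX -> R).
Proof.
apply: (measurability _ (RGenOInfty.measurableE R)).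
move=> _ [_ [x ->] <-]; apply: sub_sigma_algebra; split; first by move=> p [].
move=> p [vp /=]; rewrite in_itv /= andbT => xp.
exists (F p - x); first by rewrite subr_gt0.
move=> q vq dpq; split => //=; rewrite in_itv /= andbT.
by have := F_lip vp vq; rewrite ler_norml => /andP[_ h]; lra.
Qed.

Lemma lipschitz_borelX : borelX_r dZ A alpha tau F.
Proof. by move=> B mB; apply: lipschitz_measurable validX_measurable _ mB. Qed.

Lemma lipschitz_respects : respects dZ A alpha tau F.
Proof.
move=> p q vp vq d0; apply/eqP; rewrite -subr_eq0 -normr_le0 -d0.
exact: F_lip.
Qed.

End Lipschitz.

Definition g_exp (p : @XP R Z) : \bar R := (expR (eps alpha * xn p))%:E.

Lemma g_exp_borelX : borelX_e dZ A alpha tau g_exp.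
Proof.
move=> B mB.
suff : measurable_fun (validX : set (g_sigma_algebraType openX))
                      (g_exp : g_sigma_algebraType openX -> \bar R).
  by move/(_ validX_measurable _ mB).
apply: measurableT_comp; first exact: EFin_measurable.
apply: measurableT_comp; first exact: measurable_expR.
apply: measurableT_comp; first exact: mulrl_measurable.
exact: lipschitz_measurable xnorm_lipschitz.
Qed.

Lemma lipschitz_upper_gradient (u : @XP R Z -> R) :
  (forall p q, validX p -> validX q -> `|u p - u q| <= dG p q) ->
  upper_gradient dZ A alpha tau z0 u g_exp.
Proof.
move=> u_lip; split.
  by move=> p q vp vq d0; rewrite /g_exp (lipschitz_respects xnorm_lipschitz vp vq d0).
split; first exact: g_exp_borelX.
split; first by move=> p _; rewrite lee_fin expR_ge0.
move=> gamma a b [ab [gv _]] _.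
have va : validX (gamma a) by apply: gv; rewrite lexx ltW.
have vb : validX (gamma b) by apply: gv; rewrite lexx ltW.
have ends : ((dG (gamma a) (gamma b))%:E <= clength dZ A alpha tau gamma a b)%E.
  apply: ereal_sup_ubound; exists [:: a; b]; last by rewrite /psum /= big_ord1.
  by split; rewrite /= ?andbT ?lexx ltW.
have hu := u_lip _ _ va vb.
rewrite /rectifiable /line_int; move: ends.
case: (clength dZ A alpha tau gamma a b) => [r| |] //= ends _.
rewrite (eq_integral (cst 1%E)); last first.
  by move=> x _; rewrite /g_exp -EFinM -expRD mulNr addrN expR0.
rewrite integral_cst /=; last exact: measurable_itv.
rewrite lebesgue_measure_itv /= mul1e; rewrite lee_fin in ends.
case: ifP => [_|/negbT]; first by rewrite lee_fin subr0; apply: le_trans hu ends.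
by rewrite -leNgt => r0; rewrite lee_fin; apply: le_trans hu (le_trans ends _).
Qed.

(** * Counting edges with the doubling measure *)

Variables (nu : {measure set (g_sigma_algebraType (openZ dZ)) -> \bar R}) (C : R).
Hypothesis Hpos : forall (x : Z) (r : R), 0 < r ->
  (0 < nu (ballZ dZ x r))%E /\ (nu (ballZ dZ x r) < +oo)%E.
Hypothesis HC : forall (x : Z) (r : R), 0 < r ->
  (nu (ballZ dZ x (2 * r)) <= C%:E * nu (ballZ dZ x r))%E.
Hypothesis HAm : forall n m : nat, (n < m)%N -> A n `<=` A m.

Local Notation T := (g_sigma_algebraType (openZ dZ)).

Definition nuB x r : R := fine (nu (ballZ dZ x r : set T)).
Definition nuZ : R := fine (nu [set: T]).
Definition Cdbl : R := Num.max C 1.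

Lemma nu_ballE x r : 0 < r -> nu (ballZ dZ x r : set T) = (nuB x r)%:E /\ 0 < nuB x r.
Proof.
move=> r0; have [h1 h2] := Hpos x r0.
have f : nu (ballZ dZ x r : set T) \is a fin_num by rewrite ge0_fin_numE // ltW.
by rewrite /nuB; split; [rewrite fineK | rewrite -lte_fin fineK].
Qed.

Lemma ballZ_setT x r : 1 <= r -> (ballZ dZ x r : set T) = setT.
Proof.
move=> r1; apply/seteqP; split => // y _.
by apply: lt_le_trans r1; apply: dZ_lt1.
Qed.

Lemma nuB_ge1 x r : 1 <= r -> nuB x r = nuZ.
Proof. by move=> r1; rewrite /nuB ballZ_setT. Qed.

Lemma nuZ_gt0 : 0 < nuZ.
Proof. by rewrite -(nuB_ge1 point (lexx 1)); exact: (nu_ballE point ltr01).2. Qed.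

Lemma nu_setTE : nu [set: T] = nuZ%:E.
Proof.
by rewrite -(nuB_ge1 point (lexx 1)) -(nu_ballE point ltr01).1 ballZ_setT.
Qed.

Lemma nuB_le_nuZ x r : 0 < r -> nuB x r <= nuZ.
Proof.
move=> r0; rewrite -lee_fin -(nu_ballE x r0).1 -nu_setTE.
by apply: le_measure; rewrite ?inE //; apply: ballZ_measurable.
Qed.

Lemma Cdbl_ge1 : 1 <= Cdbl.
Proof. by rewrite /Cdbl le_max lexx orbT. Qed.

Lemma nuB_double_iter x r k : 0 < r -> nuB x (2 ^+ k * r) <= Cdbl ^+ k * nuB x r.
Proof.
move=> r0; elim: k => [|k IH]; first by rewrite !expr0 !mul1r.
have r'0 : 0 < 2 ^+ k * r by rewrite mulr_gt0 // exprn_gt0.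
have [e1 p1] := nu_ballE x r'0; have [e2 _] := nu_ballE x (mulr_gt0 (ltr0Sn R 1) r'0).
rewrite exprS -mulrA; apply: le_trans (_ : Cdbl * nuB x (2 ^+ k * r) <= _).
  have := HC x r'0; rewrite e1 e2 lee_fin => /le_trans; apply.
  by apply: ler_wpM2r; [exact: ltW|rewrite le_max lexx].
by rewrite exprS -mulrA; apply: ler_wpM2l => //; apply: le_trans ler01 Cdbl_ge1.
Qed.

Lemma halfballs_disjoint n x y : (0 < n)%N -> A n x -> A n y -> x != y ->
  (ballZ dZ x (alpha ^- n / 2) `&` ballZ dZ y (alpha ^- n / 2) : set T) = set0.
Proof.
move=> n0 ax ay /eqP xy; apply/seteqP; split => // z [hx hy].
have [sep _] := Hmax n0; have := sep x y ax ay xy.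
rewrite /ballZ /= in hx hy.
by have := dZ_triangle Hm x z y; rewrite (dZ_sym Hm z y); lra.
Qed.

Lemma sum_halfballs_le_nuZ n (X : seq Z) : (0 < n)%N -> uniq X ->
  (forall x, x \in X -> A n x) -> \sum_(x <- X) nuB x (alpha ^- n / 2) <= nuZ.
Proof.
move=> n0 uX AX; set r := alpha ^- n / 2.
have r0 : 0 < r by rewrite divr_gt0 // alpha_expN_gt0.
suff e : nu (\big[setU/set0]_(x <- X) ballZ dZ x r : set T) = (\sum_(x <- X) nuB x r)%:E.
  by rewrite -lee_fin -e -nu_setTE; apply: le_measure; rewrite ?inE //;
    apply: bigsetU_measurable => i _; apply: ballZ_measurable.
elim: X uX AX => [|x X IH] /= uX AX; first by rewrite !big_nil measure0.
move/andP: uX => [xX uX].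
rewrite !big_cons measureU.
- rewrite EFinD; congr (_ + _)%E; first exact: (nu_ballE x r0).1.
  by apply: IH => // y yX; apply: AX; rewrite inE yX orbT.
- exact: ballZ_measurable.
- by apply: bigsetU_measurable => i _; apply: ballZ_measurable.
- apply/seteqP; split => // z [hz]; rewrite -bigcup_seq => -[y yX hy].
  have xy : x != y by apply: contraNneq xX => ->.
  have <- := halfballs_disjoint n0 (AX x (mem_head _ _)) (AX y _) xy.
    by split.
  by rewrite inE yX orbT.
Qed.

Definition Ka : nat := (Num.truncn alpha).+1.

Lemma alpha_le_2expKa : alpha <= 2 ^+ Ka.
Proof.
apply: le_trans (ltW (truncnS_gt alpha)) _.
by rewrite -natrX ler_nat; apply: ltnW; apply: ltn_expl.
Qed.

(* The half-balls around the points of an alpha^-n-separated set are disjoint,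
   and doubling Ka * n + 1 times each of them covers Z. *)
Lemma card_net_le n (X : seq Z) : (0 < n)%N -> uniq X -> (forall x, x \in X -> A n x) ->
  (size X)%:R <= Cdbl ^+ (Ka * n + 1).
Proof.
move=> n0 uX AX; set r := alpha ^- n / 2; set k := (Ka * n + 1)%N.
have r0 : 0 < r by rewrite divr_gt0 // alpha_expN_gt0.
have a0 : 0 < alpha by apply: lt_trans ltr01 Ha.
have covers : 1 <= 2 ^+ k * r.
  rewrite (_ : 2 ^+ k * r = (2 ^+ Ka) ^+ n / alpha ^+ n); last first.
    by rewrite /r exprD exprM expr1; field; rewrite expf_neq0 // gt_eqF.
  rewrite ler_pdivlMr ?mul1r ?exprn_gt0 //.
  by apply: lerXn2r; rewrite ?nnegrE ?exprn_ge0 ?(ltW a0) ?alpha_le_2expKa.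
have each x : nuZ <= Cdbl ^+ k * nuB x r.
  by rewrite -(nuB_ge1 x covers); apply: nuB_double_iter.
have H1 : (size X)%:R * nuZ <= Cdbl ^+ k * \sum_(x <- X) nuB x r.
  elim: X {uX AX} => [|x X IH]; first by rewrite big_nil mul0r mulr0.
  by rewrite big_cons /= -addn1 natrD mulrDl mul1r mulrDr addrC lerD.
have H3 : (size X)%:R * nuZ <= Cdbl ^+ k * nuZ.
  apply: le_trans H1 _; apply: ler_wpM2l; last exact: sum_halfballs_le_nuZ.
  by apply: exprn_ge0; apply: le_trans ler01 Cdbl_ge1.
by rewrite -(ler_pM2r nuZ_gt0).
Qed.

(* An edge of level m joins two vertices of V_m or V_{m+1}, all of which lie
   above points of the net A_{m+1}. *)
Lemma count_lvl_le (s : seq ((Z * nat) * (Z * nat))) m : uniq s ->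
  (forall vw, vw \in s -> adj vw.1 vw.2) ->
  (count (fun vw => lvl vw == m) s)%:R <= 4 * (Cdbl ^+ (Ka * m.+1 + 1)) ^+ 2.
Proof.
move=> us adjs; rewrite -size_filter; set sm := seq.filter _ s.
have up k z : k \in [:: m; m.+1] -> A k z -> A m.+1 z.
  by rewrite !inE => /orP[/eqP->|/eqP-> //]; apply: HAm.
have ends vw : vw \in sm -> [/\ vw.1.2 \in [:: m; m.+1], vw.2.2 \in [:: m; m.+1],
                              A m.+1 vw.1.1 & A m.+1 vw.2.1].
  case: vw => [[x k] [y l]]; rewrite mem_filter /lvl /=.
  move=> /andP[/eqP lm /adjs [/= Ax Ay _ [l1 l2] _]].
  have hk : k \in [:: m; m.+1] by rewrite !inE; apply/orP; lia.
  have hl : l \in [:: m; m.+1] by rewrite !inE; apply/orP; lia.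
  by split => //; [exact: up hk Ax|exact: up hl Ay].
set X := undup ([seq vw.1.1 | vw <- sm] ++ [seq vw.2.1 | vw <- sm]).
have sX : (size X)%:R <= Cdbl ^+ (Ka * m.+1 + 1).
  apply: card_net_le => //; first exact: undup_uniq.
  by move=> z; rewrite mem_undup mem_cat => /orP[] /mapP [vw /ends[_ _ ? ?] ->].
set V := [seq (z, k) | z <- X, k <- [:: m; m.+1]].
have : {subset sm <= [seq (a, b) | a <- V, b <- V]}.
  move=> [[x k] [y l]] xs; have [hk hl _ _] := ends _ xs.
  apply: allpairs_f; apply: allpairs_f => //; rewrite mem_undup mem_cat;
    apply/orP; [left|right]; apply/mapP; by exists ((x, k), (y, l)).
move/(uniq_leq_size (seq.filter_uniq _ us)); rewrite !size_allpairs /= => h.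
apply: le_trans (_ : (size X * 2 * (size X * 2))%:R <= _); first by rewrite ler_nat.
by rewrite !natrM; have s0 : 0 <= (size X)%:R :> R by []; nra.
Qed.

Definition gauss_lvl_bound : R :=
  8 * Cdbl ^+ (2 * Ka + 2) * expR (ln (2 * Cdbl ^+ (2 * Ka)) ^+ 2).

Lemma sum_gauss_lvl_le (s : seq ((Z * nat) * (Z * nat))) : uniq s ->
  (forall vw, vw \in s -> adj vw.1 vw.2) ->
  \sum_(vw <- s) expR (- (lvl vw)%:R ^+ 2) <= gauss_lvl_bound.
Proof.
move=> us sadj; set q := Cdbl ^+ (2 * Ka); set c := Cdbl ^+ (2 * Ka + 2).
have hN vw : vw \in s -> (lvl vw < (\max_(x <- s) lvl x).+1)%N.
  by move=> vws; rewrite ltnS; apply: (leq_bigmax_seq (F := lvl)).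
rewrite (sum_comp_count (fun m => expR (- m%:R ^+ 2)) hN).
have c0 : 0 <= c by apply: exprn_ge0; apply: le_trans ler01 Cdbl_ge1.
have q1 : 1 <= q by rewrite exprn_ege1 // Cdbl_ge1.
apply: le_trans (_ : \sum_(0 <= m < _) 4 * c * expR (ln (2 * q) ^+ 2) * 2^-1 ^+ m <= _).
  apply: ler_sum => m _.
  apply: le_trans (_ : 4 * (Cdbl ^+ (Ka * m.+1 + 1)) ^+ 2 * expR (- m%:R ^+ 2) <= _).
    by apply: ler_wpM2r; [exact: expR_ge0|exact: count_lvl_le].
  rewrite -exprM (_ : ((Ka * m.+1 + 1) * 2 = 2 * Ka + 2 + 2 * Ka * m)%N); last by lia.
  rewrite exprD exprM -/c -/q -!mulrA; apply: ler_wpM2l => //; apply: ler_wpM2l => //.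
  exact: expX_gauss_le.
rewrite -mulr_sumr /gauss_lvl_bound -/q -/c.
rewrite (_ : 8 * c * _ = 4 * c * expR (ln (2 * q) ^+ 2) * 2); last by ring.
by apply: ler_wpM2l; [rewrite !mulr_ge0 ?expR_ge0|exact: sum_halfexp_le2].
Qed.

(** * Integrability against the Gaussian weight *)

Section GaussDominated.
Variables (rho : R -> R) (f : @XP R Z -> \bar R).
Hypothesis f_gauss : forall v w t, adj v w -> 0 <= t <= 1 ->
  (0 <= f (v, w, t) * (rho (xn (v, w, t)))%:E <= (expR (- xn (v, w, t) ^+ 2))%:E)%E.

Lemma edge_integral_le v w : adj v w ->
  (0 <= \int[lebesgue_measure]_(t in unit_itv) (f (v, w, t) * (rho (xn (v, w, t)))%:E)
     <= (expR (- (lvl (v, w))%:R ^+ 2))%:E)%E.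
Proof.
move=> h; have unitP t : unit_itv t -> 0 <= t <= 1 by rewrite /unit_itv /= in_itv.
apply/andP; split.
  by apply: integral_ge0 => t /unitP ht; case/andP: (f_gauss h ht).
apply: le_trans (_ : \int[lebesgue_measure]_(t in unit_itv)
                      (cst (expR (- (lvl (v, w))%:R ^+ 2))%:E t) <= _)%E.
  apply: ge0_le_integral_nomeas => t /unitP ht; first by case/andP: (f_gauss h ht).
  case/andP: (f_gauss h ht) => _ /le_trans; apply; rewrite /cst lee_fin ler_expR lerN2.
  by have := lvl_le_xnorm h ht; have : 0 <= (lvl (v, w))%:R :> R by []; nra.
rewrite integral_cst; last exact: measurable_itv.
have unit1 : (lebesgue_measure (unit_itv : set R) = 1)%E.
  by rewrite /unit_itv lebesgue_measure_itv /= lte_fin ltr01 oppr0 adde0.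
by move: unit1 => /= ->; rewrite mule1.
Qed.

Lemma nu_Bv_add_le v w : adj v w ->
  (0 <= nu (Bv dZ alpha v) + nu (Bv dZ alpha w) <= (2 * nuZ)%:E)%E.
Proof.
move=> _; have a0 := alpha_expN_gt0.
rewrite /Bv (nu_ballE v.1 (a0 v.2)).1 (nu_ballE w.1 (a0 w.2)).1 -EFinD !lee_fin.
have := (nu_ballE v.1 (a0 v.2)).2; have := (nu_ballE w.1 (a0 w.2)).2.
have := nuB_le_nuZ v.1 (a0 v.2); have := nuB_le_nuZ w.1 (a0 w.2).
by move=> *; apply/andP; split; lra.
Qed.

Lemma mu_int_lt_pinfty : (mu_int nu A alpha tau z0 rho f < +oo)%E.
Proof.
set I := fun vw : (Z * nat) * (Z * nat) => (\int[lebesgue_measure]_(t in unit_itv)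
          (f (vw.1, vw.2, t) * (rho (xn (vw.1, vw.2, t)))%:E))%E.
have edge vw : adj vw.1 vw.2 -> ((nu (Bv dZ alpha vw.1) + nu (Bv dZ alpha vw.2)) * I vw
    <= (2 * nuZ * expR (- (lvl vw)%:R ^+ 2))%:E)%E.
  case: vw => v w /= h; have /andP[w0 w1] := nu_Bv_add_le h.
  have /andP[i0 i1] := edge_integral_le h.
  by rewrite EFinM; apply: lee_pmul.
have total : (\esum_(vw in [set vw | adj vw.1 vw.2])
    ((nu (Bv dZ alpha vw.1) + nu (Bv dZ alpha vw.2)) * I vw)
      <= (2 * nuZ * gauss_lvl_bound)%:E)%E.
  apply: ge_ereal_sup => _ [F [finF FS] <-]; rewrite fsbig_finite //= big_seq.
  set S := finmap.enum_fset _.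
  apply: le_trans (_ : (\sum_(vw <- S | vw \in S)
      (2 * nuZ * expR (- (lvl vw)%:R ^+ 2))%:E <= _)%E).
    by apply: lee_sum => vw; rewrite in_fset_set // inE => /FS; exact: edge.
  rewrite -big_seq sumEFin lee_fin -mulr_sumr; apply: ler_wpM2l.
    by rewrite mulr_ge0 // ltW // nuZ_gt0.
  apply: sum_gauss_lvl_le; first exact: finmap.fset_uniq.
  by move=> x; rewrite in_fset_set // inE => /FS.
apply: le_lt_trans (_ : ((2^-1)%:E * (2 * nuZ * gauss_lvl_bound)%:E < +oo)%E);
  last by rewrite -EFinM ltry.
by apply: lee_wpmul2l; rewrite // lee_fin invr_ge0.
Qed.

End GaussDominated.

Lemma xnorm_ge0 v w t : adj v w -> 0 <= t <= 1 -> 0 <= xn (v, w, t).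
Proof. by move=> h ht; apply: le_trans (lvl_le_xnorm h ht). Qed.

Section Weight.
Variable p : R.
Hypothesis p1 : 1 <= p.
Let rho (t : R) := expR (- t ^+ 2 - eps alpha * p * t).

Lemma u_tent_in_Lp : in_Lp_r nu A alpha tau z0 rho p u_tent.
Proof.
split; first exact: lipschitz_respects u_tent_lipschitz.
split; first exact: lipschitz_borelX u_tent_lipschitz.
apply: mu_int_lt_pinfty => v w t h ht.
have /andP[u0 u1] : 0 <= `|u_tent (v, w, t)| <= 1.
  rewrite normr_ge0 /u_tent /=; case: ifP => _; last by rewrite normr0.
  by rewrite ger0_norm ?tent_ge0 //; case/andP: ht => _; apply: le_trans (tent_le t).1.
have /andP[up0 up1] : 0 <= `|u_tent (v, w, t)| `^ p <= 1.
  rewrite powR_ge0 /=; have [->|nz] := eqVneq `|u_tent (v, w, t)| 0.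
    by rewrite powR0 ?ler01 // gt_eqF // (lt_le_trans ltr01 p1).
  by apply: (le_trans (ge1r_powR _ p1)); rewrite u1 // andbT lt_def nz.
have rho_le := expR_sqr_drift_le (mulr_ge0 (ltW (ln_gt0 Ha)) (le_trans ler01 p1))
  (xnorm_ge0 h ht).
rewrite -EFinM !lee_fin mulr_ge0 ?expR_ge0 //=.
by apply: le_trans rho_le; rewrite -[X in _ <= X]mul1r ler_wpM2r ?expR_ge0.
Qed.

Lemma g_exp_in_Lp : in_Lp_e nu A alpha tau z0 rho p g_exp.
Proof.
apply: mu_int_lt_pinfty => v w t h ht.
rewrite /g_exp poweR_EFin -expRM -EFinM -expRD /rho mulrAC addrC subrK.
by rewrite !lee_fin expR_ge0 lexx.
Qed.

Lemma u_tent_in_N1p : in_N1p nu A alpha tau z0 rho p u_tent.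
Proof.
split; first exact: u_tent_in_Lp.
exists g_exp; split; last exact: g_exp_in_Lp.
exact: lipschitz_upper_gradient u_tent_lipschitz.
Qed.

End Weight.

Lemma u_avg_u_tent xi : u_avg dZ A alpha u_tent xi = fun=> 0.
Proof.
by apply/funext => n; rewrite /u_avg fsbig1 ?mul0r // => z _; rewrite /u_tent /= eqxx.
Qed.

Lemma u_tent_no_ray_limit xi :
  ~ exists L, forall xs, is_ray dZ A alpha xi xs -> ray_limit u_tent xs L.
Proof.
move=> [L HL].
have [xs hxs] : exists xs : nat -> Z, forall n, An_xi dZ A alpha n xi (xs n).
  have H n : exists y, An_xi dZ A alpha n xi y.
    by have [y ay dy] := net_cover n xi; exists y.
  by have [xs hxs] := choice H; exists xs.
have [K HK] := HL xs hxs (8^-1) ltac:(by []).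
have := HK K (leqnn K) 0 ltac:(by rewrite lexx ler01).
have := HK K (leqnn K) (2^-1) ltac:(by apply/andP; split; lra).
rewrite /u_tent /ray_point /= (_ : K != K.+1) ?tent0 ?tent_half; last by lia.
by move=> /ltr_normlP [? ?] /ltr_normlP [? ?]; lra.
Qed.

End FillingX.

Theorem mainTheorem3 (R : realType) (Z : pointedType) (dZ : Z -> Z -> R)
  (nu : {measure set (g_sigma_algebraType (openZ dZ)) -> \bar R})
  (alpha tau : R) (z0 : Z) (A : nat -> set Z) (p : R) :
  is_metric dZ -> metric_compact dZ ->
  (0 < diamZ dZ)%E -> (diamZ dZ < 1)%E ->
  doubling nu ->
  1 < alpha -> 1 < tau ->
  A 0%N = [set z0] ->
  (forall n : nat, (0 < n)%N -> maximal_separated dZ (alpha ^- n) (A n)) ->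
  (forall n m : nat, (n < m)%N -> A n `<=` A m) ->
  1 <= p ->
  let rho := fun t : R => expR (- t ^+ 2 - eps alpha * p * t) in
  exists u : @XP R Z -> R,
    in_N1p nu A alpha tau z0 rho p u /\
    trace_tilde_exists nu A alpha u /\
    trace_tilde_is nu A alpha u 0 /\
    ~ trace_T_exists nu A alpha u.
Proof.
move=> Hm _ _ Hdiam [Hpos [C HC]] Ha _ HA0 Hmax HAm p1 rho.
exists u_tent; split; [|split; [|split]].
- exact: (u_tent_in_N1p tau Hm Hdiam Ha HA0 Hmax Hpos HC HAm p1).
- by apply: aeW => xi; rewrite u_avg_u_tent; apply: cvgP (cvg_cst 0).
- by apply: aeW => xi; rewrite u_avg_u_tent; exact: cvg_cst.
- apply: (not_ae_nowhere (mu := nu) (u_tent_no_ray_limit Hm Hdiam Ha HA0 Hmax)).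
  by rewrite (nu_setTE Hdiam Hpos) lte_fin (nuZ_gt0 Hdiam Hpos).
Qed.
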